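(* Let $A$ and $B$ be nontrivial commutative groups. (a) If $A$ is a torsion group and $B$ is torsion-free, then $\mathcal D(A,B)=\{-\infty,0,\infty\}$. (b) If $A$ is a torsion group and $B$ is torsion-split with $B[\mathrm{tors}]\ne\{0\}$ and $B/B[\mathrm{tors}]\ne\{0\}$, then $\mathcal D(A,B)=\mathcal D(A,B[\mathrm{tors}])\cup\{\infty\}$. (c) If there is a surjective homomorphism $A\to\mathbb{Z}$, then $\mathcal D(A,B)=\widetilde{\mathbb N}$.
   Context: For commutative groups $A,B$, $B^A$ denotes the commutative group (under pointwise addition) of all maps $A\to B$. For $a\in A$, the difference operator $\Delta_a:B^A\to B^A$ is $(\Delta_a f)(x)=f(x+a)-f(x)$. Let $\widetilde{\mathbb N}=\mathbb N\cup\{-\infty,\infty\}$ ($\mathbb N=\{0,1,2,\dots\}$), totally ordered with $-\infty$ least and $\infty$ greatest. The functional degree $\operatorname{fdeg}(f)\in\widetilde{\mathbb N}$ of $f\in B^A$ is: $-\infty$ if $f=0$; otherwise the least $n\in\mathbb N$ such that $\Delta_{a_1}\cdots\Delta_{a_{n+1}}f=0$ for all $a_1,\dots,a_{n+1}\in A$; and $\infty$ if no such $n$ exists. $\mathcal D(A,B)=\{\operatorname{fdeg}(f):f\in B^A\}\subseteq\widetilde{\mathbb N}$. $B[\mathrm{tors}]$ is the torsion subgroup of $B$; $B$ is torsion-split if $B[\mathrm{tors}]$ is a direct summand of $B$. *)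

From HB Require Import structures.
From mathcomp Require Import all_boot all_order all_algebra.
From mathcomp Require Import boolp.
Set Implicit Arguments. Unset Strict Implicit. Unset Printing Implicit Defensive.
Import Order.TTheory GRing.Theory Num.Theory.
Local Open Scope ring_scope.

(* Extended naturals  N~ = N ∪ {-oo, +oo}, ordered -oo < 0 < 1 < ... < +oo. *)
Inductive enat := NegInf | Fin of nat | PosInf.

Section FDeg.
Variables A B : zmodType.

Definition delta (a : A) (f : A -> B) : A -> B := fun x => f (x + a) - f x.

Definition deltas (s : seq A) (f : A -> B) : A -> B := foldr delta f s.

Definition kills (n : nat) (f : A -> B) : Prop :=
  forall s : seq A, size s = n.+1 -> forall x, deltas s f x = 0.

(* is_fdeg f d  <->  fdeg f = d. *)
Definition is_fdeg (f : A -> B) (d : enat) : Prop :=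
  match d with
  | NegInf => forall x, f x = 0
  | Fin n => (exists x, f x != 0) /\ kills n f /\ (forall m, (m < n)%N -> ~ kills m f)
  | PosInf => (exists x, f x != 0) /\ (forall n, ~ kills n f)
  end.

Definition Dset (d : enat) : Prop := exists f : A -> B, is_fdeg f d.
End FDeg.

Section Tors.
Variable B : zmodType.

Definition is_tors (b : B) : Prop := exists n : nat, (0 < n)%N /\ b *+ n = 0.

Definition torsb : {pred B} := fun b => `[< is_tors b >].

Lemma torsb_zmod_closed : zmod_closed torsb.
Proof.
split.
  by apply/asboolP; exists 1%N; rewrite mulr1n.
move=> x y /asboolP [n [n0 xn]] /asboolP [m [m0 ym]]; apply/asboolP.
exists (n * m)%N; split; first by rewrite muln_gt0 n0.
by rewrite mulrnBl mulrnA xn mul0rn mulnC mulrnA ym mul0rn subr0.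
Qed.

HB.instance Definition _ := GRing.isZmodClosed.Build B torsb torsb_zmod_closed.

Record tors_sub := TorsSub { tors_val :> B; _ : tors_val \in torsb }.
HB.instance Definition _ := [isSub for tors_val].
HB.instance Definition _ := [Choice of tors_sub by <:].
HB.instance Definition _ := [SubChoice_isSubZmodule of tors_sub by <:].
End Tors.

Definition is_torsion_group (A : zmodType) : Prop := forall a : A, is_tors a.
Definition is_torsion_free (B : zmodType) : Prop :=
  forall (b : B) (n : nat), (0 < n)%N -> b *+ n = 0 -> b = 0.

Definition torsion_split (B : zmodType) : Prop :=
  exists C : B -> Prop,
    [/\ C 0, (forall x y, C x -> C y -> C (x - y)),
        (forall b, C b -> is_tors b -> b = 0) &
        (forall b, exists t c, is_tors t /\ C c /\ b = t + c)].

From HB Require Import structures.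
From mathcomp Require Import all_boot all_order all_algebra boolp zify.
Set Implicit Arguments. Unset Strict Implicit. Unset Printing Implicit Defensive.
Import GRing.Theory.
Local Open Scope ring_scope.

(* On a torsion group A, a function whose values lie in a subgroup C without
   torsion and whose iterated differences eventually vanish is constant: by
   induction every difference Delta_a f is a constant c, and if m a = 0 then
   0 = f (x + m a) - f x = m c, so c = 0.  Hence for torsion-free B only the
   degrees -oo, 0 and oo occur, the last one realised by the indicator of 0.
   If B = B[tors] (+) C, projecting onto C shows that a function of finite
   positive degree becomes torsion-valued after subtracting a constant, which
   does not change its degree.
   On Z, iterating the discrete antiderivative n times on the constant b gives
   k |-> binom(k, n) b, of degree n, and the indicator of 0 has degree oo;
   precomposition with a surjective homomorphism A -> Z preserves degrees. *)

Section FunctionalDegree.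
Variables A B : zmodType.
Implicit Types (f g : A -> B) (s : seq A) (a x : A).

Lemma deltas_rcons s a f : deltas (rcons s a) f = deltas s (delta a f).
Proof. by rewrite /deltas foldr_rcons. Qed.

Lemma eq_deltas s f g : f =1 g -> deltas s f =1 deltas s g.
Proof. by move=> fg; elim: s => [|a s IH] x //=; rewrite /delta !IH. Qed.

Lemma deltasD s f g x :
  deltas s (fun y => f y + g y) x = deltas s f x + deltas s g x.
Proof. by elim: s x => [|a s IH] x //=; rewrite /delta !IH opprD addrACA. Qed.

Lemma deltas_cst s (c : B) x :
  deltas s (fun=> c) x = if s is [::] then c else 0.
Proof.
elim: s x => [|a s IH] x //=; rewrite /delta !IH.
by case: s {IH} => [|? ?]; rewrite subrr.
Qed.

Lemma deltas_shift s f c x :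
  deltas s (fun y => f (y + c)) x = deltas s f (x + c).
Proof. by elim: s x => [|a s IH] x //=; rewrite /delta !IH addrAC. Qed.

Lemma deltas_nseq_vanish f a n x :
  (forall j, (j < n)%N -> f (x + a *+ j) = 0) ->
  deltas (nseq n a) f x = f (x + a *+ n).
Proof.
elim: n x => [|n IH] x f0 /=; first by rewrite mulr0n addr0.
rewrite /delta IH => [|j jn]; last by rewrite -addrA -mulrS f0.
rewrite IH => [|j jn]; last by rewrite f0 // ltnW.
by rewrite f0 // subr0 -addrA -mulrS.
Qed.

Lemma delta_cst_mulrn f a x m :
  (forall y, delta a f y = delta a f x) ->
  f (x + a *+ m) = f x + delta a f x *+ m.
Proof.
move=> cst; elim: m => [|m IH]; first by rewrite !mulr0n !addr0.
have step y : f (y + a) = f y + delta a f y by rewrite /delta addrCA subrr addr0.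
by rewrite mulrSr addrA step cst IH -addrA -mulrSr.
Qed.

Lemma killsSE n f : kills n.+1 f <-> forall a, kills n (delta a f).
Proof.
split=> [kf a s sn x | kf s].
  by rewrite -deltas_rcons kf // size_rcons sn.
by case/lastP: s => [//|s a]; rewrite size_rcons => -[sn] x; rewrite deltas_rcons kf.
Qed.

Lemma kills0E f : kills 0 f <-> forall a x, f (x + a) = f x.
Proof.
split=> [kf a x | fa [|a []] //= _ x]; last by rewrite /delta fa subrr.
by apply/eqP; rewrite -subr_eq0; apply/eqP; apply: (kf [:: a]).
Qed.

Lemma kills_leq m n f : (m <= n)%N -> kills m f -> kills n f.
Proof.
move=> /subnK <-; elim: (n - m)%N => [//|k IH] /IH kf [//|a s] /= [sn] x.
by rewrite /delta !kf // subrr.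
Qed.

Lemma eq_kills n f g : f =1 g -> kills n f -> kills n g.
Proof. by move=> fg kf s sn x; rewrite -(eq_deltas s fg) kf. Qed.

Lemma killsD n f g : kills n f -> kills n g -> kills n (fun y => f y + g y).
Proof. by move=> kf kg s sn x; rewrite deltasD kf // kg // addr0. Qed.

Lemma kills_shift n f c : kills n f -> kills n (fun y => f (y + c)).
Proof. by move=> kf s sn x; rewrite deltas_shift kf. Qed.

Lemma kills_cst n (c : B) : kills n (fun _ : A => c).
Proof. by move=> [|a s] // _ x; rewrite deltas_cst. Qed.

Lemma kills_subr_cst n f (c : B) : kills n (fun y => f y - c) <-> kills n f.
Proof.
have E s x : size s = n.+1 -> deltas s (fun y => f y - c) x = deltas s f x.
  by case: s => // a s _; rewrite deltasD deltas_cst addr0.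
by split=> kf s sn x; [rewrite -E // kf | rewrite E // kf].
Qed.

Lemma exists_neq0P f : (exists x, f x != 0) <-> ~ (forall x, f x = 0).
Proof.
split=> [[x fx] f0 | nf0]; first by rewrite f0 eqxx in fx.
apply: contrapT => nex; apply: nf0 => x; apply/eqP.
by apply: contra_notT nex => fx; exists x.
Qed.

Lemma is_fdeg_FinS n f :
  is_fdeg f (Fin n.+1) <-> kills n.+1 f /\ (forall m, (m < n.+1)%N -> ~ kills m f).
Proof.
split=> [[_ //] | [kf low]]; split=> //; apply/exists_neq0P => f0.
by apply: (low 0%N) => //; apply: (eq_kills _ (@kills_cst 0 0)) => x; rewrite f0.
Qed.

Lemma is_fdeg_cst (c : B) : c != 0 -> is_fdeg (fun _ : A => c) (Fin 0).
Proof. by move=> c0; split; [exists 0 | split=> //; apply/kills0E]. Qed.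

Lemma is_fdeg_subr_cst n f (c : B) :
  is_fdeg f (Fin n.+1) -> is_fdeg (fun y => f y - c) (Fin n.+1).
Proof.
move=> /is_fdeg_FinS [kf low]; apply/is_fdeg_FinS.
by split=> [|m mn]; rewrite kills_subr_cst //; apply: low.
Qed.

End FunctionalDegree.

Lemma is_fdeg_transfer (A B A' B' : zmodType) (f : A -> B) (g : A' -> B') d :
  ((forall x, f x = 0) <-> (forall y, g y = 0)) ->
  (forall n, kills n f <-> kills n g) -> is_fdeg f d <-> is_fdeg g d.
Proof.
move=> f0g0 kfg.
have nz : (exists x, f x != 0) <-> (exists y, g y != 0).
  by split=> /exists_neq0P nf0; apply/exists_neq0P => z0; apply/nf0/f0g0.
case: d => [|n|] //=.
  by split=> -[/nz nz' [/kfg kn low]]; split=> //; split=> // m mn /kfg; apply: low.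
by split=> -[/nz nz' nk]; split=> // n /kfg; apply: nk.
Qed.

Section Homomorphisms.
Variables A A' B B' : zmodType.

Lemma deltas_morph_comp (h : B -> B') (f : A -> B) s x :
  {morph h : u v / u - v} -> deltas s (fun y => h (f y)) x = h (deltas s f x).
Proof. by move=> hB; elim: s x => [|a s IH] x //=; rewrite /delta !IH hB. Qed.

Lemma morphB_0 (h : B -> B') : {morph h : u v / u - v} -> h 0 = 0.
Proof. by move=> hB; rewrite -(subrr 0) hB subrr. Qed.

Lemma kills_morph_comp n (h : B -> B') (f : A -> B) :
  {morph h : u v / u - v} -> kills n f -> kills n (fun y => h (f y)).
Proof. by move=> hB kf s sn x; rewrite deltas_morph_comp // kf // morphB_0. Qed.

Lemma is_fdeg_inj_comp (h : B -> B') (f : A -> B) d :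
  {morph h : u v / u - v} -> injective h ->
  is_fdeg (fun y => h (f y)) d <-> is_fdeg f d.
Proof.
move=> hB h_inj; have h0 := morphB_0 hB.
have h_eq0 u : h u = 0 <-> u = 0 by split=> [|->//]; rewrite -h0 => /h_inj.
apply: is_fdeg_transfer => [|n].
  by split=> f0 x; [apply/h_eq0 | rewrite f0].
split=> kf s sn x; last by rewrite (deltas_morph_comp f s x hB) kf.
by apply/h_eq0; rewrite -(deltas_morph_comp f s x hB) kf.
Qed.

Lemma deltas_comp_morph (phi : A -> A') (g : A' -> B) s x :
  {morph phi : u v / u + v} ->
  deltas s (fun y => g (phi y)) x = deltas (map phi s) g (phi x).
Proof. by move=> phiD; elim: s x => [|a s IH] x //=; rewrite /delta !IH phiD. Qed.

Lemma is_fdeg_surj_comp (phi : A -> A') (g : A' -> B) d :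
  {morph phi : u v / u + v} -> (forall y, exists x, phi x = y) ->
  is_fdeg (fun x => g (phi x)) d <-> is_fdeg g d.
Proof.
move=> phiD /choice [psi psiK].
apply: is_fdeg_transfer => [|n].
  by split=> g0 y; [rewrite -(psiK y) g0 | rewrite g0].
split=> kg s sn y; last by rewrite deltas_comp_morph // kg ?size_map.
by rewrite -(mapK psiK s) -(psiK y) -deltas_comp_morph // kg ?size_map.
Qed.

End Homomorphisms.

Section TorsionDomain.
Variables (A B : zmodType) (C : B -> Prop).
Hypothesis A_tors : is_torsion_group A.
Hypothesis CB : forall x y, C x -> C y -> C (x - y).
Hypothesis C_torsfree : forall b, C b -> is_tors b -> b = 0.

Lemma kills_torsion_const n (f : A -> B) :
  (forall x, C (f x)) -> kills n f -> kills 0 f.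
Proof.
elim: n f => [//|n IH] f Cf /killsSE kf; apply/kills0E => a x.
have /kills0E cst : kills 0 (delta a f) by apply: IH (kf a) => y; apply: CB.
have [m [m0 am]] := A_tors a.
suff : delta a f x = 0 by move/eqP; rewrite subr_eq0 => /eqP.
apply: C_torsfree; first exact: CB.
exists m; split=> //; apply: (addrI (f x)).
by rewrite -delta_cst_mulrn ?am ?addr0 // => y; rewrite -(subrK x y) addrC cst.
Qed.

Lemma is_fdeg_indicator (c : B) :
  (exists a : A, a != 0) -> C c -> c != 0 ->
  is_fdeg (fun x : A => if x == 0 then c else 0) PosInf.
Proof.
move=> [a a0] Cc c0; split; first by exists 0; rewrite eqxx.
move=> n /kills_torsion_const kc.
have /kills0E /(_ a 0) : kills 0 (fun x : A => if x == 0 then c else 0).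
  by apply: kc => x; case: ifP => // _; rewrite -(subrr c); apply: CB.
by rewrite add0r eqxx (negbTE a0) => c00; rewrite -c00 eqxx in c0.
Qed.

End TorsionDomain.

Definition antidiff (M : zmodType) (g : int -> M) (k : int) : M :=
  match k with
  | Posz m => \sum_(i < m) g (Posz i)
  | Negz m => - \sum_(i < m.+1) g (Negz i)
  end.

Section IntegerDomain.
Variable M : zmodType.
Implicit Types (g : int -> M) (b : M).

Lemma antidiffS g k : antidiff g (k + 1) = antidiff g k + g k.
Proof.
case: k => [m|[|m]].
- have -> : Posz m + 1 = Posz m.+1 by rewrite -addn1 PoszD.
  by rewrite /= big_ord_recr.
- have -> : Negz 0 + 1 = 0 by [].
  by rewrite /= big_ord0 big_ord1 addNr.
- have -> : Negz m.+1 + 1 = Negz m by rewrite !NegzE; lia.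
  by rewrite /= [in RHS]big_ord_recr /= opprD subrK.
Qed.

Lemma delta1_antidiff g : delta 1 (antidiff g) =1 g.
Proof. by move=> k; rewrite /delta antidiffS addrAC subrr add0r. Qed.

Lemma kills_delta1 n g : kills n (delta 1 g) -> kills n.+1 g.
Proof.
move=> k1; apply/killsSE.
have kpos m : kills n (delta (Posz m) g).
  elim: m => [|m IH].
    by apply: (eq_kills _ (@kills_cst _ _ n 0)) => y; rewrite /delta addr0 subrr.
  apply: (eq_kills _ (killsD IH (kills_shift (Posz m) k1))) => y.
  by rewrite /delta -addn1 PoszD [y + (_ + _)]addrA [LHS]addrC addrA subrK.
case=> m; first exact: kpos.
have oppB : {morph -%R : u v / u - v :> M} by move=> u v; rewrite opprD.
apply: (eq_kills _ (kills_morph_comp oppB (kills_shift (Negz m) (kpos m.+1)))).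
by move=> y; rewrite /delta NegzE addrNK opprB.
Qed.

Lemma kills_iter_antidiff n b : kills n (iter n (@antidiff M) (fun=> b)).
Proof.
elim: n => [|n IH]; first exact: kills_cst.
by apply/kills_delta1/(eq_kills _ IH) => k; rewrite /= delta1_antidiff.
Qed.

Lemma deltas_iter_antidiff n b x :
  deltas (nseq n 1) (iter n (@antidiff M) (fun=> b)) x = b.
Proof.
elim: n x => [//|n IH] x; rewrite -addn1 nseqD cats1 deltas_rcons -[RHS](IH x).
by apply: eq_deltas => k; rewrite addn1 /= delta1_antidiff.
Qed.

Lemma is_fdeg_iter_antidiff n b :
  b != 0 -> is_fdeg (iter n (@antidiff M) (fun=> b)) (Fin n).
Proof.
case: n => [|n] b0; first exact: is_fdeg_cst.
apply/is_fdeg_FinS; split=> [|m mn]; first exact: kills_iter_antidiff.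
move/(kills_leq (_ : m <= n)%N) => kn; move: b0.
by rewrite -(deltas_iter_antidiff n.+1 b 0) kn ?size_nseq ?eqxx // -ltnS.
Qed.

Lemma is_fdeg_int_indicator b :
  b != 0 -> is_fdeg (fun k : int => if k == 0 then b else 0) PosInf.
Proof.
move=> b0; split=> [|n kn]; first by exists 0; rewrite eqxx.
have := kn (nseq n.+1 1) (size_nseq _ _) (- n.+1%:Z).
rewrite deltas_nseq_vanish => [|j jn]; last by rewrite natz ifF //; apply/eqP; lia.
by rewrite natz addNr eqxx => b00; rewrite b00 eqxx in b0.
Qed.

Lemma Dset_int : (exists b : M, b != 0) -> forall d, Dset int M d.
Proof.
move=> [b b0] [|n|].
- by exists (fun=> 0).
- by exists (iter n (@antidiff M) (fun=> b)); apply: is_fdeg_iter_antidiff.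
- by exists (fun k : int => if k == 0 then b else 0); apply: is_fdeg_int_indicator.
Qed.

End IntegerDomain.

Lemma torsbP (B : zmodType) (b : B) : reflect (is_tors b) (b \in @torsb B).
Proof. exact: asboolP. Qed.

Lemma is_torsB (B : zmodType) (u v : B) : is_tors u -> is_tors v -> is_tors (u - v).
Proof. by move=> /torsbP tu /torsbP tv; apply/torsbP/rpredB. Qed.

Section TorsionSplit.
Variables (B : zmodType) (C : B -> Prop).
Hypothesis CB : forall x y, C x -> C y -> C (x - y).
Hypothesis C_torsfree : forall b, C b -> is_tors b -> b = 0.

Lemma torsion_complement_uniq b c1 c2 :
  C c1 -> C c2 -> is_tors (b - c1) -> is_tors (b - c2) -> c1 = c2.
Proof.
move=> C1 C2 t1 t2; apply/eqP; rewrite -subr_eq0; apply/eqP.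
apply: C_torsfree; first exact: CB.
have -> : c1 - c2 = (b - c2) - (b - c1) by rewrite opprB [RHS]addrC addrA subrK.
exact: is_torsB.
Qed.

Lemma torsion_complement_proj :
  (forall b, exists t c, is_tors t /\ C c /\ b = t + c) ->
  exists pi : B -> B,
    [/\ {morph pi : u v / u - v}, forall b, C (pi b) & forall b, is_tors (b - pi b)].
Proof.
move=> decB; have /choice [pi pi_spec] : forall b, exists c, C c /\ is_tors (b - c).
  by move=> b; have [t [c [tt [Cc ->]]]] := decB b; exists c; rewrite addrK.
exists pi; split=> [u v | b | b]; [| exact: (pi_spec b).1 | exact: (pi_spec b).2].
apply: (@torsion_complement_uniq (u - v)); first exact: (pi_spec _).1.
- by apply: CB; apply: (pi_spec _).1.
- exact: (pi_spec _).2.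
have -> : u - v - (pi u - pi v) = (u - pi u) - (v - pi v).
  by rewrite !opprB addrACA [RHS]addrACA [- v + _]addrC.
by apply: is_torsB; apply: (pi_spec _).2.
Qed.

End TorsionSplit.

Lemma Dset_torsion_torsion_free (A B : zmodType) :
  (exists a : A, a != 0) -> (exists b : B, b != 0) ->
  is_torsion_group A -> is_torsion_free B ->
  forall d, Dset A B d <-> (d = NegInf \/ d = Fin 0 \/ d = PosInf).
Proof.
move=> hA [b b0] A_tors B_tf d.
have B_torsfree (c : B) : True -> is_tors c -> c = 0.
  by move=> _ [n [n0]]; apply: B_tf.
have trivB (x y : B) : True -> True -> True by [].
split=> [[f fd] | [->|[->|->]]].
- case: d fd => [|[|n]|] fd; [by left | by right; left | exfalso | by right; right].
  case/is_fdeg_FinS: fd => kf low; apply: (low 0%N) => //.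
  exact: (kills_torsion_const A_tors trivB B_torsfree (fun=> I) kf).
- by exists (fun=> 0).
- by exists (fun=> b); apply: is_fdeg_cst.
- exists (fun x : A => if x == 0 then b else 0).
  exact: (is_fdeg_indicator A_tors trivB B_torsfree hA).
Qed.

Lemma Dset_torsion_split (A B : zmodType) :
  (exists a : A, a != 0) -> is_torsion_group A -> torsion_split B ->
  (exists t : B, is_tors t /\ t != 0) -> (exists b : B, ~ is_tors b) ->
  forall d, Dset A B d <-> (Dset A (tors_sub B) d \/ d = PosInf).
Proof.
move=> hA A_tors [C [_ CB Ctf decB]] [t [tt t0]] [b nb] d.
have [pi [piB Cpi tpi]] := torsion_complement_proj CB Ctf decB.
have val_fdeg (g : A -> tors_sub B) d' :
    is_fdeg (fun x => val (g x)) d' <-> is_fdeg g d'.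
  exact: is_fdeg_inj_comp (@GRing.valB _ _ _) val_inj.
split=> [[f fd] | [[g gd] | ->]].
- case: d fd => [|[|n]|] fd; [left | left | left | by right].
  + by exists (fun=> 0).
  + have tB : t \in @torsb B by apply/torsbP.
    by exists (fun=> TorsSub tB); apply/val_fdeg/is_fdeg_cst.
  + have /kills0E pif : kills 0 (fun x => pi (f x)).
      exact: (kills_torsion_const A_tors CB Ctf (fun x => Cpi (f x))
                (kills_morph_comp piB fd.2.1)).
    have tors x : f x - pi (f 0) \in @torsb B.
      by apply/torsbP; rewrite -(pif x 0) add0r.
    by exists (fun x => TorsSub (tors x)); apply/val_fdeg/is_fdeg_subr_cst.
- by exists (fun x => val (g x)); apply/val_fdeg.
- have [t' [c [tt' [Cc bE]]]] := decB b.
  have c0 : c != 0 by apply/eqP => c0; apply: nb; rewrite bE c0 addr0.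
  exists (fun x : A => if x == 0 then c else 0).
  exact: (is_fdeg_indicator A_tors CB Ctf hA).
Qed.

Lemma Dset_surj_int (A B : zmodType) (phi : A -> int) :
  (exists b : B, b != 0) -> {morph phi : x y / x + y} ->
  (forall z, exists x, phi x = z) -> forall d, Dset A B d.
Proof.
move=> hB phiD phi_surj d; have [g gd] := Dset_int hB d.
by exists (fun x => g (phi x)); apply/(is_fdeg_surj_comp g d phiD phi_surj).
Qed.

Theorem proposition3p9 (A B : zmodType)
  (hA : exists a : A, a != 0) (hB : exists b : B, b != 0) :
  (* (a) *)
  (is_torsion_group A -> is_torsion_free B ->
     forall d, Dset A B d <-> (d = NegInf \/ d = Fin 0 \/ d = PosInf)) /\
  (* (b) *)
  (is_torsion_group A -> torsion_split B ->
     (exists t : B, is_tors t /\ t != 0) ->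
     (exists b : B, ~ is_tors b) ->
     forall d, Dset A B d <-> (Dset A (tors_sub B) d \/ d = PosInf)) /\
  (* (c) *)
  ((exists phi : A -> int,
       (forall x y, phi (x + y) = phi x + phi y) /\
       (forall z : int, exists x, phi x = z)) ->
     forall d, Dset A B d).
Proof.
split; first exact: Dset_torsion_torsion_free.
split; first exact: Dset_torsion_split hA.
by move=> [phi [phiD phi_surj]]; apply: Dset_surj_int phiD phi_surj.
Qed.
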